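(* Let $d\geq 2$, energies $E_1\leq\dots\leq E_d$, inverse temperatures $\alpha>\beta\geq0$, $\gamma_k=e^{-\alpha E_k}/\sum_i e^{-\alpha E_i}$, $\Gamma_k=e^{-\beta E_k}/\sum_i e^{-\beta E_i}$, and assume $\gamma_1>\frac12$ and $\Gamma_1<\Gamma_d+\Gamma_{d-1}$. Let $\mathbf{p}$ be a probability vector with $p_k/\gamma_k\geq p_{k+1}/\gamma_{k+1}$ for all $k$. Then $\mathbf{p}\succ_{\boldsymbol{\Gamma}}\mathbf{q}\succ_{\boldsymbol{\gamma}}\mathbf{r}$, where $$q_1=p_d+\frac{\Gamma_1-\Gamma_d}{\Gamma_{d-1}}p_{d-1},\quad q_k=\frac{\Gamma_k}{1-\Gamma_1}(1-q_1),\qquad r_1=1-\frac{1-\gamma_1}{\gamma_1}q_1,\quad r_k=\frac{\gamma_k}{\gamma_1}q_1,$$ for $k>1$. Moreover, $r_k/\gamma_k\geq r_{k+1}/\gamma_{k+1}$ for all $k$.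
   Context: For a full-support probability vector $\mathbf{g}$, $\mathbf{p}\succ_{\mathbf{g}}\mathbf{q}$ (thermomajorisation) means: ordering indices by a permutation $\pi$ with $p_{\pi_i}/g_{\pi_i}$ non-increasing in $i$, the piecewise linear curve through $\left(\sum_{i\leq j}g_{\pi_i},\sum_{i\leq j}p_{\pi_i}\right)$, $j=0,\dots,d$, is nowhere below the analogous curve of $\mathbf{q}$. *)

From mathcomp Require Import all_boot all_order all_algebra.
From mathcomp Require Import reals.
From mathcomp Require Import sequences exp.
From mathcomp Require Import fingroup perm.
Set Implicit Arguments. Unset Strict Implicit. Unset Printing Implicit Defensive.
Import Order.TTheory GRing.Theory Num.Theory.
Local Open Scope ring_scope.

Section Thermo.
Variables (R : realType) (d : nat).

Definition gibbs (b : R) (E : 'I_d -> R) (k : 'I_d) : R :=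
  expR (- (b * E k)) / \sum_(i < d) expR (- (b * E i)).

Definition prob_vec (p : 'I_d -> R) : Prop :=
  (forall i, 0 <= p i) /\ \sum_(i < d) p i = 1.

Definition beta_ordering (g p : 'I_d -> R) (pi : {perm 'I_d}) : Prop :=
  forall i j : 'I_d, (i <= j)%N -> p (pi j) / g (pi j) <= p (pi i) / g (pi i).

Definition xbreak (g : 'I_d -> R) (pi : {perm 'I_d}) (i : 'I_d) : R :=
  \sum_(k < d | (k < i)%N) g (pi k).

Definition clamp01 (t : R) : R := Num.min 1 (Num.max 0 t).

(* The piecewise linear curve through the points
   (\sum_{i<=j} g_{pi i}, \sum_{i<=j} p_{pi i}), j = 0..d, evaluated at x:
   the i-th segment has horizontal extent g_{pi i} and rise p_{pi i}. *)
Definition curve (g p : 'I_d -> R) (pi : {perm 'I_d}) (x : R) : R :=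
  \sum_(i < d) p (pi i) * clamp01 ((x - xbreak g pi i) / g (pi i)).

Definition thermomaj (g p q : 'I_d -> R) : Prop :=
  exists (pi sigma : {perm 'I_d}),
    beta_ordering g p pi /\ beta_ordering g q sigma /\
    forall x : R, 0 <= x <= \sum_(i < d) g i ->
      curve g q sigma x <= curve g p pi x.

End Thermo.

From mathcomp Require Import all_boot all_order all_algebra.
From mathcomp Require Import reals boolp.
From mathcomp Require Import sequences exp.
From mathcomp Require Import fingroup perm.
From mathcomp Require Import ring lra.

Set Implicit Arguments.
Unset Strict Implicit.
Unset Printing Implicit Defensive.
Import Order.TTheory GRing.Theory Num.Theory.
Local Open Scope ring_scope.

(* For v sorted by v/g, the curve of v has a supporting line at every point
   (it is concave), so once it passes above a point (x0, s x0) it lies above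
   the hinge min (s x, 1 - t (1 - x)) through (0, 0), (x0, s x0) and (1, 1).
   A vector putting mass a on one index i and spreading the rest in proportion
   to g has only the two slopes a / g_i and (1 - a) / (1 - g_i), so its curve
   is at most that hinge.  Both q and r have this shape.  For p and q the
   corner is x0 = 1 - Gamma_1, which lies on the penultimate segment of the
   curve of p because Gamma_1 < Gamma_d + Gamma_(d-1); there the curve equals
   1 - q_1.  For q and r the corner is x0 = gamma_1: since gamma_1 > 1/2, the
   segment of index 1 in the curve of q starts before 1 - gamma_1 < gamma_1,
   so the curve of q at gamma_1 is at least r_1.  Finally p/Gamma is sorted
   because p/gamma and gamma/Gamma are. *)

(* For [b <= e], the length of (-oo, x] meet [b, e]. *)
Definition overlap {R : realType} (x b e : R) : R := Num.min x e - Num.min x b.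

Section Overlap.
Variable R : realType.
Implicit Types a b e g x y : R.

Lemma mul_clamp01 g b x : 0 < g -> g * clamp01 ((x - b) / g) = overlap x b (b + g).
Proof.
move=> g_gt0; rewrite /clamp01 /overlap.
have [xb|bx] := leP x b.
  have u0 : (x - b) / g <= 0 by rewrite pmulr_lle0 ?invr_gt0 ?subr_le0.
  by rewrite (max_idPl u0) (min_idPr ler01) min_l ?mulr0 ?subrr //; lra.
have u0 : 0 <= (x - b) / g by rewrite divr_ge0 ?subr_ge0 ?ltW.
rewrite (max_idPr u0); have [xbg|bgx] := leP x (b + g).
  have u1 : (x - b) / g <= 1 by rewrite ler_pdivrMr ?mul1r; lra.
  by rewrite (min_idPr u1) mulrC divfK ?gt_eqF.
have u1 : 1 <= (x - b) / g by rewrite ler_pdivlMr ?mul1r; lra.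
by rewrite (min_idPl u1) mulr1 addrC addKr.
Qed.

Lemma overlap_le a y b e : b <= e -> a <= y -> overlap a b e <= overlap y b e.
Proof.
move=> be ay; rewrite /overlap.
by case: (leP a e); case: (leP a b); case: (leP y e); case: (leP y b); lra.
Qed.

Lemma overlap_eq a y b e : b <= e -> a <= y -> (y <= b) || (e <= a) ->
  overlap a b e = overlap y b e.
Proof.
move=> be ay /orP off; rewrite /overlap.
by case: (leP a e); case: (leP a b); case: (leP y e); case: (leP y b); lra.
Qed.

End Overlap.

Section Curve.
Variables (R : realType) (m : nat) (g : 'I_m.+1 -> R) (pi : {perm 'I_m.+1}).
Hypothesis g_gt0 : forall i, 0 < g i.
Implicit Types (v w : 'I_m.+1 -> R) (a c s t x y z : R) (i j : 'I_m.+1).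

(* [xbreak g pi i] is [mass_below i]; the nat index is what telescopes. *)
Definition mass_below (k : nat) : R := \sum_(i < m.+1 | (i < k)%N) g (pi i).

Local Notation xb := (xbreak g pi).
Local Notation slope v i := (v (pi i) / g (pi i)).
Local Notation cover x i := (overlap x (xb i) (xb i + g (pi i))).

Lemma mass_belowS (i : 'I_m.+1) : mass_below i.+1 = xb i + g (pi i).
Proof.
rewrite /mass_below (bigD1 i) ?ltnSn //= addrC; congr (_ + _).
by apply: eq_bigl => k; rewrite ltnS [(k < i)%N]ltn_neqAle andbC.
Qed.

Lemma mass_below_total : mass_below m.+1 = \sum_i g i.
Proof.
rewrite [RHS](reindex_inj (@perm_inj _ pi)) /=.
by apply: eq_bigl => i; rewrite ltn_ord.
Qed.

Lemma mass_below_le k l : (k <= l)%N -> mass_below k <= mass_below l.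
Proof.
move=> kl; rewrite /mass_below big_mkcond [leRHS]big_mkcond /=.
apply: ler_sum => i _.
case: ifP => [ik|_]; first by rewrite (leq_trans ik kl).
by case: ifP => // _; apply: ltW.
Qed.

Lemma xbreak_ge0 i : 0 <= xb i.
Proof. by apply: sumr_ge0 => k _; rewrite ltW. Qed.

Lemma xbreak_add_le (i j : 'I_m.+1) : (i < j)%N -> xb i + g (pi i) <= xb j.
Proof. by move=> ij; rewrite -mass_belowS; apply: mass_below_le. Qed.

Lemma xbreak_add_le_total i : xb i + g (pi i) <= \sum_k g k.
Proof. by rewrite -mass_belowS -mass_below_total; apply: mass_below_le. Qed.

Lemma curveE v x : curve g v pi x = \sum_i slope v i * cover x i.
Proof.
by apply: eq_bigr => i _; rewrite -mul_clamp01 // mulrA divfK ?gt_eqF.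
Qed.

Lemma sum_cover x : 0 <= x -> x <= \sum_i g i -> \sum_i cover x i = x.
Proof.
move=> x0 xS; have -> : \sum_i cover x i =
    \sum_(0 <= k < m.+1) (Num.min x (mass_below k.+1) - Num.min x (mass_below k)).
  by rewrite big_mkord; apply: eq_bigr => i _; rewrite mass_belowS.
have mass_below0 : mass_below 0 = 0 by rewrite /mass_below big_pred0.
by rewrite telescope_sumr // mass_below_total mass_below0 min_l // min_r // subr0.
Qed.

Lemma cover_incr_ge0 a y i : a <= y -> 0 <= cover y i - cover a i.
Proof. by move=> ay; rewrite subr_ge0 overlap_le // lerDl ltW. Qed.

Lemma cover_incr_eq0 a y i : a <= y ->
  ~~ ((xb i < y) && (a < xb i + g (pi i))) -> cover y i - cover a i = 0.
Proof.
move=> ay off; rewrite (@overlap_eq _ a y) ?subrr //; first by rewrite lerDl ltW.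
by rewrite !leNgt -negb_and.
Qed.

Lemma curve_incrE v a y : 0 <= a -> a <= y -> y <= \sum_i g i ->
  curve g v pi y - curve g v pi a = \sum_i slope v i * (cover y i - cover a i)
  /\ y - a = \sum_i (cover y i - cover a i).
Proof.
move=> a0 ay yS; rewrite !curveE -!sumrB.
split; first by apply: eq_bigr => i _; rewrite -mulrBr.
by rewrite sumrB !sum_cover ?(le_trans a0 ay) ?(le_trans ay yS).
Qed.

Lemma curve_incr_le v c a y : 0 <= a -> a <= y -> y <= \sum_i g i ->
  (forall i, xb i < y -> a < xb i + g (pi i) -> slope v i <= c) ->
  curve g v pi y - curve g v pi a <= c * (y - a).
Proof.
move=> a0 ay yS slope_le; have [-> ->] := curve_incrE v a0 ay yS.
rewrite mulr_sumr; apply: ler_sum => i _.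
have [/andP[iy ai]|off] := boolP ((xb i < y) && (a < xb i + g (pi i))).
  by apply: ler_wpM2r; [apply: cover_incr_ge0 | apply: slope_le].
by rewrite cover_incr_eq0 // !mulr0.
Qed.

Lemma curve_incr_ge v c a y : 0 <= a -> a <= y -> y <= \sum_i g i ->
  (forall i, xb i < y -> a < xb i + g (pi i) -> c <= slope v i) ->
  c * (y - a) <= curve g v pi y - curve g v pi a.
Proof.
move=> a0 ay yS slope_ge; have [-> ->] := curve_incrE v a0 ay yS.
rewrite mulr_sumr; apply: ler_sum => i _.
have [/andP[iy ai]|off] := boolP ((xb i < y) && (a < xb i + g (pi i))).
  by apply: ler_wpM2r; [apply: cover_incr_ge0 | apply: slope_ge].
by rewrite cover_incr_eq0 // !mulr0.
Qed.

Lemma curve0 v : curve g v pi 0 = 0.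
Proof.
rewrite curveE big1 // => i _.
have xb0 := xbreak_ge0 i; have gi := g_gt0 (pi i).
by rewrite /overlap !min_l ?subrr ?mulr0 //; lra.
Qed.

Lemma curve_total v : curve g v pi (\sum_k g k) = \sum_k v k.
Proof.
rewrite curveE [RHS](reindex_inj (@perm_inj _ pi)); apply: eq_bigr => i _.
have top := xbreak_add_le_total i.
have xb_le : xb i <= xb i + g (pi i) by rewrite lerDl ltW.
rewrite /overlap (min_r top) (min_r (le_trans xb_le top)) addrC addKr.
by rewrite divfK ?gt_eqF.
Qed.

Lemma curve_on_segment v j a y : xb j <= a -> a <= y -> y <= xb j + g (pi j) ->
  curve g v pi y - curve g v pi a = slope v j * (y - a).
Proof.
move=> ja ay yj.
have only_j i : xb i < y -> a < xb i + g (pi i) -> i = j.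
  move=> iy ai; case: (ltngtP i j) => [ij|ji|/val_inj //]; exfalso.
    by have := xbreak_add_le ij; lra.
  by have := xbreak_add_le ji; lra.
have a0 : 0 <= a by apply: le_trans (xbreak_ge0 j) ja.
have yS : y <= \sum_k g k by apply: le_trans (xbreak_add_le_total j).
apply/eqP; rewrite eq_le curve_incr_le ?curve_incr_ge //.
  by move=> i iy ai; rewrite (only_j i iy ai).
by move=> i iy ai; rewrite (only_j i iy ai).
Qed.

Lemma curve_le_hinge w s t x : \sum_k g k = 1 -> \sum_k w k = 1 ->
  (forall k, t <= w k / g k <= s) -> 0 <= x <= 1 ->
  curve g w pi x <= Num.min (s * x) (1 - t * (1 - x)).
Proof.
move=> g1 w1 slopes /andP[x0 x1].
have slope_le i : slope w i <= s by case/andP: (slopes (pi i)).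
have slope_ge i : t <= slope w i by case/andP: (slopes (pi i)).
have total : curve g w pi 1 = 1 by rewrite -{1}g1 curve_total.
have xS : x <= \sum_k g k by rewrite g1.
have oneS : 1 <= \sum_k g k by rewrite g1.
rewrite le_min; apply/andP; split.
  have := curve_incr_le (v := w) (c := s) (lexx 0) x0 xS.
  by rewrite curve0 !subr0; apply=> i _ _; apply: slope_le.
have := curve_incr_ge (v := w) (c := t) x0 x1 oneS.
by rewrite total; move=> /(_ (fun i _ _ => slope_ge i)); lra.
Qed.


Section Sorted.
Variable v : 'I_m.+1 -> R.
Hypothesis v_sorted : beta_ordering g v pi.

Lemma exists_separating_slope x : exists c,
  (forall i, xb i < x -> c <= slope v i) /\
  (forall i, x < xb i + g (pi i) -> slope v i <= c).
Proof.
case: (pickP (fun i => xb i < x)) => [i0 i0x|none]; last first.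
  by exists (slope v ord0); split=> [i|i _]; [rewrite none | apply: v_sorted].
have [J Jx J_max] := @arg_maxnP _ i0 (fun i => xb i < x) val i0x.
exists (slope v J); split=> [i ix|i xi]; first exact/v_sorted/J_max.
apply: v_sorted; rewrite leqNgt; apply/negP => iJ.
by have := xbreak_add_le iJ; lra.
Qed.

Lemma curve_support x : 0 <= x -> x <= \sum_k g k ->
  exists c, forall z, 0 <= z -> z <= \sum_k g k ->
    curve g v pi z <= curve g v pi x + c * (z - x).
Proof.
move=> x0 xS; have [c [left right]] := exists_separating_slope x.
exists c => z z0 zS; have [xz|zx] := leP x z.
  by have := curve_incr_le (c := c) x0 xz zS (fun i _ xi => right i xi); lra.
by have := curve_incr_ge (c := c) z0 (ltW zx) xS (fun i ix _ => left i ix); lra.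
Qed.

Lemma curve_tail_le j a : xb j <= a -> a <= \sum_k g k ->
  curve g v pi (\sum_k g k) - curve g v pi a <= slope v j * (\sum_k g k - a).
Proof.
move=> ja aS; apply: curve_incr_le => // [|i _ ai].
  exact: le_trans (xbreak_ge0 j) ja.
apply: v_sorted; rewrite leqNgt; apply/negP => ij.
by have := xbreak_add_le ij; lra.
Qed.

Hypotheses (g_sum1 : \sum_k g k = 1) (v_sum1 : \sum_k v k = 1).

Lemma curve_ge_hinge x0 s t x : 0 <= x0 <= 1 -> s * x0 = 1 - t * (1 - x0) ->
  s * x0 <= curve g v pi x0 -> 0 <= x <= 1 ->
  Num.min (s * x) (1 - t * (1 - x)) <= curve g v pi x.
Proof.
move=> /andP[x00 x01] hinge above /andP[x0' x1].
(* Evaluate a supporting line at x in the points 0, 1 and x0. *)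
have le_total z : z <= 1 -> z <= \sum_k g k by rewrite g_sum1.
have [c support] := curve_support x0' (le_total x x1).
have at0 := support 0 (lexx 0) (le_total 0 ler01).
have at1 := support 1 ler01 (le_total 1 (lexx 1)).
have atx0 := support x0 x00 (le_total x0 x01).
have total : curve g v pi 1 = 1 by rewrite -{1}g_sum1 curve_total.
rewrite curve0 in at0; rewrite total in at1; rewrite ge_min.
have [xx0|x0x] := leP x x0.
  by case: (leP s c) => sc; apply/orP; left; nra.
by case: (leP c t) => ct; apply/orP; right; nra.
Qed.

Lemma curve_ge_id x : 0 <= x <= 1 -> x <= curve g v pi x.
Proof.
move=> x01; have := @curve_ge_hinge 0 1 1 x.
rewrite curve0 (_ : 1 - 1 * (1 - x) = x); last by lra.
by rewrite !mul1r minxx; apply=> //; rewrite ?lexx ?ler01 //; lra.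
Qed.

Lemma curve_heavy_ge i : 1 / 2 <= g i ->
  1 - v i / g i * (1 - g i) <= curve g v pi (g i).
Proof.
(* The segment of i starts before 1 - g i <= g i, and later segments are flatter. *)
move=> heavy; set j := (pi^-1)%g i; have pij : pi j = i by rewrite permKV.
have := xbreak_add_le_total j; have := xbreak_ge0 j; rewrite pij g_sum1.
have total : curve g v pi 1 = 1 by rewrite -{1}g_sum1 curve_total.
move=> xb0 top; have := @curve_tail_le j (g i); rewrite pij g_sum1 total.
have xbj_le : xb j <= g i by lra.
have gi_le1 : g i <= 1 by lra.
by move=> /(_ xbj_le gi_le1); lra.
Qed.

End Sorted.

End Curve.

Lemma beta_ordering_trans (R : realType) (d : nat) (g h v : 'I_d -> R)
    (pi : {perm 'I_d}) :
  (forall i, 0 < g i) -> (forall i, 0 < h i) -> (forall i, 0 <= v i) ->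
  beta_ordering g v pi -> beta_ordering h g pi -> beta_ordering h v pi.
Proof.
move=> g_gt0 h_gt0 v_ge0 vg gh i j ij.
have factor k : v k / h k = v k / g k * (g k / h k) by rewrite mulrA divfK ?gt_eqF.
rewrite !factor; apply: ler_pM; [| |exact: vg|exact: gh].
  by apply: divr_ge0; [apply: v_ge0 | apply: ltW].
by apply: divr_ge0; apply: ltW.
Qed.

Lemma beta_ordering1 (R : realType) (m : nat) (g v : 'I_m.+1 -> R) :
  (forall k : 'I_m.+1, (k.+1 < m.+1)%N ->
     v (inord k.+1) / g (inord k.+1) <= v k / g k) ->
  beta_ordering g v 1.
Proof.
move=> adjacent i j ij; rewrite !perm1.
pose F k := v (inord k) / g (inord k).
have F_anti : {in [pred k | (k < m.+1)%N] &,
    {homo F : k l / (k <= l)%N >-> (fun a b => b <= a) k l}}.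
  apply: homo_leq_in => [x|y x z yx zy|k l _|k]; first exact: lexx.
  - exact: le_trans zy yx.
  - by rewrite !inE => l_lt n /andP[_ nl]; rewrite inE (ltn_trans nl l_lt).
  by rewrite !inE => k_lt k1_lt; have := adjacent (inord k); rewrite inordK //; apply.
by have := F_anti i j (ltn_ord i) (ltn_ord j) ij; rewrite /F !inord_val.
Qed.

Lemma exists_beta_ordering (R : realType) (m : nat) (g v : 'I_m.+1 -> R) :
  exists pi : {perm 'I_m.+1}, beta_ordering g v pi.
Proof.
pose leT : rel 'I_m.+1 := fun i j => v j / g j <= v i / g i.
have leT_total : total leT by move=> i j; rewrite /leT le_total.
have leT_trans : transitive leT by move=> j i k /= ji kj; apply: le_trans kj ji.
pose s := sort leT (enum 'I_m.+1).
have size_s : size s = m.+1 by rewrite size_sort size_enum_ord.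
have s_uniq : uniq s by rewrite sort_uniq enum_uniq.
pose f (i : 'I_m.+1) := nth ord0 s i.
have f_inj : injective f.
  by move=> i j /eqP; rewrite nth_uniq ?size_s // => /eqP /val_inj.
exists (perm f_inj) => i j ij; rewrite !permE.
have := sorted_leq_nth leT_trans (fun i => lexx (v i / g i)) ord0
  (sort_sorted leT_total (enum 'I_m.+1)).
by move/(_ i j); rewrite !inE size_s !ltn_ord; apply.
Qed.

Lemma pos_entry_lt1 (R : realType) (d : nat) (g : 'I_d -> R) i j :
  (forall k, 0 < g k) -> \sum_k g k = 1 -> i != j -> g i < 1.
Proof.
move=> g_gt0 g1 ij; rewrite -g1 (bigD1 i) //= ltrDl (bigD1 j) 1?eq_sym //=.
by apply: ltr_pwDl => //; apply: sumr_ge0 => k _; apply: ltW.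
Qed.

Lemma thermomaj_of_hinge (R : realType) (m : nat) (g v w : 'I_m.+1 -> R)
    (pi : {perm 'I_m.+1}) (x0 s t : R) :
  (forall k, 0 < g k) -> \sum_k g k = 1 -> \sum_k v k = 1 -> \sum_k w k = 1 ->
  beta_ordering g v pi -> (forall k, t <= w k / g k <= s) ->
  0 <= x0 <= 1 -> s * x0 = 1 - t * (1 - x0) -> s * x0 <= curve g v pi x0 ->
  thermomaj g v w.
Proof.
move=> g_gt0 g1 v1 w1 v_sorted slopes x0_01 hinge above.
have [sigma w_sorted] := exists_beta_ordering g w.
exists pi, sigma; split=> //; split=> // x; rewrite g1 => x01.
apply: le_trans (curve_le_hinge sigma g_gt0 g1 w1 slopes x01) _.
exact (curve_ge_hinge g_gt0 v_sorted g1 v1 x0_01 hinge above x01).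
Qed.

Definition two_level (R : realType) (d : nat) (g : 'I_d -> R) (i : 'I_d) (a : R) :
  'I_d -> R := fun k => if k == i then a else g k * ((1 - a) / (1 - g i)).

Section TwoLevel.
Variables (R : realType) (m : nat) (g : 'I_m.+1 -> R) (i : 'I_m.+1) (a : R).
Hypotheses (g_gt0 : forall k, 0 < g k) (g_sum1 : \sum_k g k = 1) (gi_lt1 : g i < 1).
Implicit Types (v : 'I_m.+1 -> R) (pi : {perm 'I_m.+1}) (k : 'I_m.+1).

Lemma two_level_sum1 : \sum_k two_level g i a k = 1.
Proof.
rewrite (bigD1 i) //= {1}/two_level eqxx.
rewrite (eq_bigr (fun k => g k * ((1 - a) / (1 - g i)))) => [|k /negbTE ki]; last first.
  by rewrite /two_level ki.
have rest : \sum_(k | k != i) g k = 1 - g i.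
  by rewrite -g_sum1 [in RHS](bigD1 i) //= addrAC subrr add0r.
by rewrite -mulr_suml rest mulrC divfK ?subr_eq0 ?gt_eqF // addrC subrK.
Qed.

Lemma two_level_slope k :
  two_level g i a k / g k = if k == i then a / g i else (1 - a) / (1 - g i).
Proof. by rewrite /two_level; case: eqP => [->|_] //; rewrite mulrC mulKf ?gt_eqF. Qed.

Lemma two_level_slope_le : a <= g i ->
  forall k, a / g i <= two_level g i a k / g k <= (1 - a) / (1 - g i).
Proof.
move=> a_le k; have gi_gt0 := g_gt0 i.
have lo : a / g i <= 1 by rewrite ler_pdivrMr ?mul1r.
have hi : 1 <= (1 - a) / (1 - g i) by rewrite ler_pdivlMr ?mul1r ?subr_gt0 //; lra.
by rewrite two_level_slope; case: eqP => _; apply/andP; split; lra.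
Qed.

Lemma two_level_slope_ge : g i <= a ->
  forall k, (1 - a) / (1 - g i) <= two_level g i a k / g k <= a / g i.
Proof.
move=> a_ge k; have gi_gt0 := g_gt0 i.
have hi : 1 <= a / g i by rewrite ler_pdivlMr ?mul1r.
have lo : (1 - a) / (1 - g i) <= 1 by rewrite ler_pdivrMr ?mul1r ?subr_gt0 //; lra.
by rewrite two_level_slope; case: eqP => _; apply/andP; split; lra.
Qed.

Lemma thermomaj_two_level_le v pi : \sum_k v k = 1 -> beta_ordering g v pi ->
  a <= g i -> 1 - a <= curve g v pi (1 - g i) -> thermomaj g v (two_level g i a).
Proof.
move=> v1 v_sorted a_le above; have gi_gt0 := g_gt0 i.
apply: (thermomaj_of_hinge (x0 := 1 - g i) g_gt0 g_sum1 v1 two_level_sum1 v_sorted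
  (two_level_slope_le a_le)).
- by rewrite subr_ge0 gerBl !ltW.
- rewrite divfK ?subr_eq0 ?gt_eqF // (_ : 1 - (1 - g i) = g i) ?divfK ?gt_eqF //.
  by lra.
- by rewrite divfK ?subr_eq0 ?gt_eqF.
Qed.

Lemma thermomaj_two_level_ge v pi : \sum_k v k = 1 -> beta_ordering g v pi ->
  g i <= a -> a <= curve g v pi (g i) -> thermomaj g v (two_level g i a).
Proof.
move=> v1 v_sorted a_ge above; have gi_gt0 := g_gt0 i.
apply: (thermomaj_of_hinge (x0 := g i) g_gt0 g_sum1 v1 two_level_sum1 v_sorted
  (two_level_slope_ge a_ge)).
- by rewrite !ltW.
- by rewrite divfK ?subr_eq0 ?gt_eqF // divfK ?subr_eq0 ?gt_eqF //; lra.
- by rewrite divfK ?gt_eqF.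
Qed.

End TwoLevel.

Lemma two_level_first_sorted (R : realType) (m : nat) (g : 'I_m.+1 -> R) (a : R) :
  (forall k, 0 < g k) -> g (inord 0) < 1 -> g (inord 0) <= a ->
  forall j k : 'I_m.+1, (j <= k)%N ->
    two_level g (inord 0) a k / g k <= two_level g (inord 0) a j / g j.
Proof.
move=> g_gt0 g0_lt1 a_ge j k jk; have [k0|k_ne] := eqVneq k (inord 0).
  have j0 : j = inord 0.
    by apply/ord_inj/eqP; move: jk; rewrite k0 inordK // leqn0.
  by rewrite k0 j0.
rewrite (two_level_slope _ _ g_gt0 k) (negbTE k_ne).
by have /andP[lo _] := two_level_slope_ge g_gt0 g0_lt1 a_ge j.
Qed.

Section Penultimate.
Variables (R : realType) (n : nat) (g v : 'I_n.+2 -> R).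
Hypotheses (g_gt0 : forall k, 0 < g k) (g_sum1 : \sum_k g k = 1).
Hypotheses (v_sum1 : \sum_k v k = 1) (v_sorted : beta_ordering g v 1).
Hypotheses (last_le : g (inord n.+1) <= g (inord 0))
  (first_lt : g (inord 0) < g (inord n.+1) + g (inord n)).

Let a := v (inord n.+1) + (g (inord 0) - g (inord n.+1)) / g (inord n) * v (inord n).

(* The penultimate segment of the curve is [1 - g_d - g_(d-1), 1 - g_d]. *)
Lemma curve_penultimate x :
  1 - g (inord n.+1) - g (inord n) <= x -> x <= 1 - g (inord n.+1) ->
  curve g v 1 x =
  1 - v (inord n.+1) - v (inord n) / g (inord n) * (1 - g (inord n.+1) - x).
Proof.
move=> x_lo x_hi.
set last : 'I_n.+2 := inord n.+1; set pen : 'I_n.+2 := inord n.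
have xb_last : xbreak g 1 last = 1 - g last.
  have := mass_belowS g 1 last; rewrite /last inordK // mass_below_total g_sum1 perm1.
  by move=> ->; rewrite addrK.
have xb_pen : xbreak g 1 pen = 1 - g last - g pen.
  have := mass_belowS g 1 pen; rewrite perm1 /pen inordK //.
  have -> : mass_below g 1 n.+1 = xbreak g 1 last by rewrite /xbreak /last inordK.
  by rewrite xb_last => ->; rewrite addrK.
have total : curve g v 1 1 = 1 by rewrite -{1}g_sum1 curve_total.
have gl := g_gt0 last; have gp := g_gt0 pen.
have seg_last : curve g v 1 1 - curve g v 1 (1 - g last) = v last.
  rewrite -xb_last (@curve_on_segment _ _ _ 1 g_gt0 v last) ?perm1 ?xb_last; try lra.
  by rewrite (_ : 1 - (1 - g last) = g last) ?divfK ?gt_eqF //; lra.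
have seg_pen : curve g v 1 (1 - g last) - curve g v 1 x =
               v pen / g pen * (1 - g last - x).
  by rewrite -xb_last (@curve_on_segment _ _ _ 1 g_gt0 v pen) ?perm1 ?xb_pen ?xb_last //; lra.
lra.
Qed.

Lemma curve_at_first : curve g v 1 (1 - g (inord 0)) = 1 - a.
Proof.
rewrite curve_penultimate /a; [ring | have := first_lt; lra | have := last_le; lra].
Qed.

Lemma first_lt1 : g (inord 0) < 1.
Proof.
by apply: (pos_entry_lt1 (j := inord n.+1) g_gt0 g_sum1); rewrite -val_eqE /= !inordK.
Qed.

Lemma penultimate_mass_le : a <= g (inord 0).
Proof.
have x_range : 0 <= 1 - g (inord 0) <= 1 by rewrite subr_ge0 gerBl !ltW ?first_lt1 ?g_gt0.
have := curve_ge_id g_gt0 v_sorted g_sum1 v_sum1 x_range.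
by rewrite curve_at_first; lra.
Qed.

Lemma thermomaj_two_level_penultimate : thermomaj g v (two_level g (inord 0) a).
Proof.
apply: (thermomaj_two_level_le g_gt0 g_sum1 first_lt1 v_sum1 v_sorted).
  exact: penultimate_mass_le.
by rewrite curve_at_first.
Qed.

End Penultimate.

Section Heavy.
Variables (R : realType) (m : nat) (g v : 'I_m.+1 -> R) (i : 'I_m.+1).
Hypotheses (g_gt0 : forall k, 0 < g k) (g_sum1 : \sum_k g k = 1) (v_sum1 : \sum_k v k = 1).
Hypotheses (heavy : 1 / 2 <= g i) (gi_lt1 : g i < 1) (vi_le : v i <= g i).

Let b := 1 - (1 - g i) / g i * v i.

Lemma heavy_mass_ge : g i <= b.
Proof.
have gi_gt0 := g_gt0 i.
have : (1 - g i) / g i * v i <= 1 - g i.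
  rewrite mulrAC ler_pdivrMr // ler_wpM2l // subr_ge0; exact: ltW.
by rewrite /b; lra.
Qed.

Lemma thermomaj_two_level_heavy : thermomaj g v (two_level g i b).
Proof.
have [pi v_sorted] := exists_beta_ordering g v.
apply: (thermomaj_two_level_ge g_gt0 g_sum1 gi_lt1 v_sum1 v_sorted heavy_mass_ge).
have -> : b = 1 - v i / g i * (1 - g i) by rewrite /b; ring.
exact (curve_heavy_ge g_gt0 v_sorted g_sum1 v_sum1 heavy).
Qed.

End Heavy.

Section Gibbs.
Variables (R : realType) (m : nat) (E : 'I_m.+1 -> R).
Implicit Types (a b : R) (i j k : 'I_m.+1).

Lemma partition_gt0 b : 0 < \sum_i expR (- (b * E i)).
Proof.
rewrite (bigD1 ord0) //=; apply: ltr_pwDl; first exact: expR_gt0.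
by apply: sumr_ge0 => i _; apply/ltW/expR_gt0.
Qed.

Lemma gibbs_gt0 b k : 0 < gibbs b E k.
Proof. by rewrite divr_gt0 ?expR_gt0 ?partition_gt0. Qed.

Lemma gibbs_sum1 b : \sum_k gibbs b E k = 1.
Proof. by rewrite -mulr_suml divff // gt_eqF ?partition_gt0. Qed.

Lemma gibbs_le b i j : 0 <= b -> E i <= E j -> gibbs b E j <= gibbs b E i.
Proof.
move=> b0 Eij; rewrite ler_pM2r ?invr_gt0 ?partition_gt0 // ler_expR lerN2.
exact: ler_wpM2l.
Qed.

Lemma gibbs_cross_le a b i j : b <= a -> E i <= E j ->
  gibbs a E j * gibbs b E i <= gibbs a E i * gibbs b E j.
Proof.
move=> ba Eij; rewrite /gibbs mulrACA [leRHS]mulrACA.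
rewrite ler_pM2r ?mulr_gt0 ?invr_gt0 ?partition_gt0 // -!expRD ler_expR.
by nra.
Qed.

Lemma gibbs_ground_le a b i : b <= a -> (forall j, E i <= E j) ->
  gibbs b E i <= gibbs a E i.
Proof.
move=> ba E_min.
have : \sum_j gibbs a E j * gibbs b E i <= \sum_j gibbs a E i * gibbs b E j.
  by apply: ler_sum => j _; apply: gibbs_cross_le.
by rewrite -mulr_suml -mulr_sumr !gibbs_sum1 mul1r mulr1.
Qed.

Lemma beta_ordering_gibbs a b : b <= a ->
  (forall i j : 'I_m.+1, (i <= j)%N -> E i <= E j) ->
  beta_ordering (gibbs b E) (gibbs a E) 1.
Proof.
move=> ba E_sorted i j ij; rewrite !perm1.
rewrite ler_pdivrMr ?gibbs_gt0 // mulrAC ler_pdivlMr ?gibbs_gt0 //.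
exact/gibbs_cross_le/E_sorted.
Qed.

End Gibbs.

Theorem lemma17 (R : realType) (n : nat)
  (E : 'I_n.+2 -> R) (alpha beta : R) (p : 'I_n.+2 -> R) :
  (forall i j : 'I_n.+2, (i <= j)%N -> E i <= E j) ->
  0 <= beta -> beta < alpha ->
  let gam := @gibbs R n.+2 alpha E in
  let Gam := @gibbs R n.+2 beta E in
  let i1 : 'I_n.+2 := inord 0 in
  let id : 'I_n.+2 := inord n.+1 in
  let id1 : 'I_n.+2 := inord n in
  gam i1 > 1 / 2 ->
  Gam i1 < Gam id + Gam id1 ->
  prob_vec p ->
  (forall k : 'I_n.+2, (k.+1 < n.+2)%N ->
     p (inord k.+1) / gam (inord k.+1) <= p k / gam k) ->
  let q1 := p id + (Gam i1 - Gam id) / Gam id1 * p id1 in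
  let q : 'I_n.+2 -> R := fun k =>
    if k == i1 then q1 else Gam k / (1 - Gam i1) * (1 - q1) in
  let r : 'I_n.+2 -> R := fun k =>
    if k == i1 then 1 - (1 - gam i1) / gam i1 * q1 else gam k / gam i1 * q1 in
  thermomaj Gam p q /\ thermomaj gam q r /\
  (forall k : 'I_n.+2, (k.+1 < n.+2)%N ->
     r (inord k.+1) / gam (inord k.+1) <= r k / gam k).
Proof.
move=> E_sorted beta_ge0 beta_lt gam Gam i1 id id1 gam1_big Gam1_lt [p_ge0 p_sum1]
  p_adjacent q1 q r.
have gam_gt0 k : 0 < gam k := gibbs_gt0 E alpha k.
have Gam_gt0 k : 0 < Gam k := gibbs_gt0 E beta k.
have [gam_sum1 Gam_sum1] := (gibbs_sum1 E alpha, gibbs_sum1 E beta).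
have gam1_lt1 : gam i1 < 1 := first_lt1 gam_gt0 gam_sum1.
have Gam1_lt1 : Gam i1 < 1 := first_lt1 Gam_gt0 Gam_sum1.
have p_sorted : beta_ordering Gam p 1 := beta_ordering_trans gam_gt0 Gam_gt0 p_ge0
  (beta_ordering1 p_adjacent) (beta_ordering_gibbs (ltW beta_lt) E_sorted).
have Gid_le : Gam id <= Gam i1 by apply/gibbs_le/E_sorted; rewrite ?inordK.
have qi1_le : q i1 <= gam i1.
  rewrite /q eqxx; apply: le_trans (penultimate_mass_le Gam_gt0 Gam_sum1 p_sum1
    p_sorted Gid_le Gam1_lt) _.
  by apply: gibbs_ground_le (ltW beta_lt) _ => j; apply: E_sorted; rewrite inordK.
have q_two : q = two_level Gam i1 q1.
  by apply/funext => k; rewrite /q /two_level; case: eqP => // _; ring.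
have r_two : r = two_level gam i1 (1 - (1 - gam i1) / gam i1 * q i1).
  apply/funext => k; rewrite /r /two_level [q i1]/q eqxx; case: eqP => // _.
  by field; rewrite subr_eq0 (gt_eqF gam1_lt1) (gt_eqF (gam_gt0 i1)).
have q_sum1 : \sum_k q k = 1 by rewrite q_two two_level_sum1.
split; [|split].
- by rewrite q_two; apply: thermomaj_two_level_penultimate.
- by rewrite r_two; apply: thermomaj_two_level_heavy; rewrite // ltW.
move=> k k_lt; rewrite r_two; apply: two_level_first_sorted => //.
  exact: heavy_mass_ge gam_gt0 gam1_lt1 qi1_le.
by rewrite inordK.
Qed.
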